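(* Let $m,n$ be positive integers and let $r_1,\dots,r_k$ and $s_1,\dots,s_k$ be positive integers with $\sum_{i=1}^k r_i=m$ and $\sum_{i=1}^k s_i=n$. Put $a_0=0$ and $a_p=\sum_{i=1}^p(nr_i-ms_i)$ for $p\in[k-1]$. Let $\Lambda=(a'_1,\dots,a'_n|b'_1,\dots,b'_m)\in\mathbb Z^{n|m}$ where $(b'_1,\dots,b'_m)$ is the concatenation, for $i=1,\dots,k$, of the blocks $(a_{i-1},a_{i-1}+n,a_{i-1}+2n,\dots,a_{i-1}+(r_i-1)n)$, and $(a'_1,\dots,a'_n)$ is the concatenation, for $i=1,\dots,k-1$, of the blocks $(a_i+(s_i-1)m,\dots,a_i+m,a_i)$, followed by the block $((s_k-1)m,\dots,m,0)$. Then $\Lambda$ lies in the orbit of $\Lambda_0=(m(n-1),\dots,m,0\,|\,0,n,\dots,n(m-1))$ under the Weyl groupoid action on $\mathbb Z^{n|m}$.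
   Context: Elements of $\mathbb Z^{n|m}$ are written $\Lambda=(a_1,\dots,a_n|b_1,\dots,b_m)$, identified with $\sum_ia_i\epsilon_i-\sum_jb_j\delta_j$. The Weyl groupoid action (Sergeev–Veselov action with parameter $-n/m$) is generated by: the group $S_n\times S_m$ permuting $a_1,\dots,a_n$ among themselves and $b_1,\dots,b_m$ among themselves; and, for each $\alpha=\epsilon_i-\delta_j$, the bijection $\tau_\alpha:\Pi_\alpha\to\Pi_{-\alpha}$, $\Lambda\mapsto\Lambda+n\epsilon_i-m\delta_j$ (adding $n$ to $a_i$ and $m$ to $b_j$) and its inverse $\tau_{-\alpha}$, where $\Pi_\alpha=\{a_i=b_j\}$ and $\Pi_{-\alpha}=\{a_i-b_j=n-m\}$. The orbit of $\Lambda_0$ is the set of elements reachable from $\Lambda_0$ by finite sequences of such permutations and maps $\tau_{\pm\alpha}$ (each applied on its domain). *)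

From HB Require Import structures.
From mathcomp Require Import all_boot all_order all_algebra all_fingroup.
From Stdlib Require Import Relations.
Set Implicit Arguments. Unset Strict Implicit. Unset Printing Implicit Defensive.
Import Order.TTheory GRing.Theory Num.Theory.
Local Open Scope ring_scope.

Definition elt (n m : nat) : Type := ({ffun 'I_n -> int} * {ffun 'I_m -> int})%type.

(* One generating move of the Weyl groupoid action (parameter -n/m). *)
Inductive wstep (n m : nat) : elt n m -> elt n m -> Prop :=
| wstep_perm (s : {perm 'I_n}) (t : {perm 'I_m}) (L : elt n m) :
    wstep L ([ffun i => L.1 (s i)], [ffun j => L.2 (t j)])
| wstep_tau (i : 'I_n) (j : 'I_m) (L : elt n m) :
    L.1 i = L.2 j ->
    wstep L ([ffun i' => if i' == i then L.1 i' + n%:Z else L.1 i'],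
             [ffun j' => if j' == j then L.2 j' + m%:Z else L.2 j'])
| wstep_tauinv (i : 'I_n) (j : 'I_m) (L : elt n m) :
    L.1 i - L.2 j = n%:Z - m%:Z ->
    wstep L ([ffun i' => if i' == i then L.1 i' - n%:Z else L.1 i'],
             [ffun j' => if j' == j then L.2 j' - m%:Z else L.2 j']).

Definition weyl_orbit (n m : nat) (L0 L : elt n m) : Prop :=
  clos_refl_trans (elt n m) (@wstep n m) L0 L.

Definition Lambda0 (n m : nat) : elt n m :=
  ([ffun i : 'I_n => (m * (n.-1 - i))%N%:Z], [ffun j : 'I_m => (n * j)%N%:Z]).

(* a_p = sum_{i=1}^p (n r_i - m s_i), with r, s 0-indexed sequences. *)
Definition apref (n m : nat) (r s : seq nat) (p : nat) : int :=
  \sum_(i < p) ((n * nth 0 r i)%N%:Z - (m * nth 0 s i)%N%:Z).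

Definition bseq (n m : nat) (r s : seq nat) : seq int :=
  flatten [seq [seq apref n m r s i + (l * n)%N%:Z | l <- iota 0 (nth 0 r i)]
          | i <- iota 0 (size r)].

(* a' : blocks (a_i+(s_i-1)m, ..., a_i+m, a_i) for i = 1..k-1, then
   ((s_k-1)m, ..., m, 0).  Index i (1-based) is i'.+1 with i' 0-based. *)
Definition aseq (n m : nat) (r s : seq nat) : seq int :=
  flatten [seq [seq (if (i'.+1 < size s)%N then apref n m r s i'.+1 else 0)
                    + ((nth 0 s i' - 1 - l) * m)%N%:Z
               | l <- iota 0 (nth 0 s i')]
          | i' <- iota 0 (size s)].

Definition LambdaRS (n m : nat) (r s : seq nat) : elt n m :=
  ([ffun i : 'I_n => nth 0 (aseq n m r s) i],
   [ffun j : 'I_m => nth 0 (bseq n m r s) j]).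

From mathcomp Require Import all_boot all_order all_algebra all_fingroup.
From mathcomp Require Import zify ring.
From Stdlib Require Import Relations.
Set Implicit Arguments. Unset Strict Implicit. Unset Printing Implicit Defensive.
Import Order.TTheory GRing.Theory Num.Theory.
Local Open Scope ring_scope.

(* A word w over {up = true, down = false} with m ups and n downs is a lattice
   path starting at height 0 with up-steps +n and down-steps -m.  It encodes the
   element whose b-entries are the heights at which the up-steps start and whose
   a-entries are the heights at which the down-steps end.  Replacing a factor
   [up; down] starting at height h by [down; up] turns the entries a = h + n - m
   and b = h into a = b = h - m, which is a tau^{-1} move up to permutations.
   Bubble sort reaches every word from up^m down^n, the path of Lambda_0, and
   Lambda is the path of up^r_1 down^s_1 ... up^r_k down^s_k, which ends at
   height n * sum r - m * sum s = 0. *)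

Section LatticePaths.

Variables n m : nat.

Fixpoint down_heights (h : int) (w : seq bool) : seq int :=
  if w is b :: w' then
    if b then down_heights (h + n%:Z) w'
    else (h - m%:Z) :: down_heights (h - m%:Z) w'
  else [::].

Fixpoint up_heights (h : int) (w : seq bool) : seq int :=
  if w is b :: w' then
    if b then h :: up_heights (h + n%:Z) w' else up_heights (h - m%:Z) w'
  else [::].

Fixpoint path_end (h : int) (w : seq bool) : int :=
  if w is b :: w' then path_end (if b then h + n%:Z else h - m%:Z) w' else h.

Lemma down_heights_cat h u v :
  down_heights h (u ++ v) = down_heights h u ++ down_heights (path_end h u) v.
Proof. by elim: u h => [|[] u IH] h //=; rewrite IH. Qed.

Lemma up_heights_cat h u v :
  up_heights h (u ++ v) = up_heights h u ++ up_heights (path_end h u) v.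
Proof. by elim: u h => [|[] u IH] h //=; rewrite IH. Qed.

Lemma path_end_cat h u v : path_end h (u ++ v) = path_end (path_end h u) v.
Proof. by elim: u h => [|[] u IH] h //=. Qed.

Lemma size_down_heights h w : size (down_heights h w) = count negb w.
Proof. by elim: w h => [|[] w IH] h //=; rewrite IH. Qed.

Lemma size_up_heights h w : size (up_heights h w) = count id w.
Proof. by elim: w h => [|[] w IH] h //=; rewrite IH. Qed.

Lemma down_heights_ups h c : down_heights h (nseq c true) = [::].
Proof. by elim: c h => //= c IH h. Qed.

Lemma up_heights_downs h c : up_heights h (nseq c false) = [::].
Proof. by elim: c h => //= c IH h. Qed.

Lemma path_end_ups h c : path_end h (nseq c true) = h + (c * n)%N%:Z.
Proof. by elim: c h => [|c IH] h /=; [rewrite addr0 | rewrite IH; lia]. Qed.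

Lemma path_end_downs h c : path_end h (nseq c false) = h - (c * m)%N%:Z.
Proof. by elim: c h => [|c IH] h /=; [rewrite subr0 | rewrite IH; lia]. Qed.

Lemma up_heights_ups h c :
  up_heights h (nseq c true) = [seq h + (l * n)%N%:Z | l <- iota 0 c].
Proof.
elim: c h => [|c IH] h //=.
rewrite IH addr0 -[in RHS](addn0 1%N) iotaDl -map_comp.
by congr (_ :: _); apply: eq_map => l /=; lia.
Qed.

Lemma down_heights_downs h c :
  down_heights h (nseq c false) = [seq h - (l.+1 * m)%N%:Z | l <- iota 0 c].
Proof.
elim: c h => [|c IH] h //=.
rewrite IH mul1n -[in RHS](addn0 1%N) iotaDl -map_comp.
by congr (_ :: _); apply: eq_map => l /=; lia.
Qed.

End LatticePaths.

Definition elt_of_seqs n m (A B : seq int) : elt n m :=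
  ([ffun i : 'I_n => nth 0 A i], [ffun j : 'I_m => nth 0 B j]).

Definition path_elt n m (w : seq bool) : elt n m :=
  elt_of_seqs n m (down_heights n m 0 w) (up_heights n m 0 w).

Lemma wstep_perm_eq n m A A' B B' : size A = n -> size B = m ->
  perm_eq A A' -> perm_eq B B' ->
  wstep (elt_of_seqs n m A B) (elt_of_seqs n m A' B').
Proof.
move=> /eqP sA /eqP sB pAA' pBB'.
have sA' : size A' == n by rewrite -(perm_size pAA').
have sB' : size B' == m by rewrite -(perm_size pBB').
have /tuple_permP[p Ep] : perm_eq (Tuple sA') (Tuple sA) by rewrite perm_sym.
have /tuple_permP[q Eq] : perm_eq (Tuple sB') (Tuple sB) by rewrite perm_sym.
suff -> : elt_of_seqs n m A' B' =
  ([ffun i => (elt_of_seqs n m A B).1 (p i)],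
   [ffun j => (elt_of_seqs n m A B).2 (q j)]) by exact: wstep_perm.
congr pair; apply/ffunP => i; rewrite !ffunE.
- have -> : nth 0 A' i = tnth [tuple tnth (Tuple sA) (p i) | i < n] i.
    by rewrite (tnth_nth 0) -Ep.
  by rewrite tnth_mktuple (tnth_nth 0).
- have -> : nth 0 B' i = tnth [tuple tnth (Tuple sB) (q i) | i < m] i.
    by rewrite (tnth_nth 0) -Eq.
  by rewrite tnth_mktuple (tnth_nth 0).
Qed.

Lemma wstep_tauinv_head n m x A B : (0 < n)%N -> (0 < m)%N ->
  wstep (elt_of_seqs n m (x + n%:Z :: A) (x + m%:Z :: B))
        (elt_of_seqs n m (x :: A) (x :: B)).
Proof.
move=> n_gt0 m_gt0; set L := elt_of_seqs n m _ _.
suff -> : elt_of_seqs n m (x :: A) (x :: B) =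
  ([ffun i => if i == Ordinal n_gt0 then L.1 i - n%:Z else L.1 i],
   [ffun j => if j == Ordinal m_gt0 then L.2 j - m%:Z else L.2 j]).
  by apply: wstep_tauinv; rewrite /L /elt_of_seqs !ffunE /=; ring.
by congr pair; apply/ffunP => -[[|i] lt_i]; rewrite !ffunE -val_eqE /= ?addrK.
Qed.

Definition swap_up_down (u v : seq bool) :=
  exists p q, u = p ++ [:: true, false & q] /\ v = p ++ [:: false, true & q].

Notation swaps := (clos_refl_trans _ swap_up_down).

Lemma perm_cat_cons (T : eqType) (P Q : seq T) y :
  perm_eq (P ++ y :: Q) (y :: P ++ Q).
Proof. by rewrite -cat1s perm_catCA. Qed.

Lemma orbit_swap_up_down n m u v : (0 < n)%N -> (0 < m)%N ->
  count negb u = n -> count id u = m -> swap_up_down u v ->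
  weyl_orbit (path_elt n m u) (path_elt n m v).
Proof.
move=> n_gt0 m_gt0 cnt_n cnt_m [p [q [def_u ->]]].
have := size_down_heights n m 0 u; have := size_up_heights n m 0 u.
rewrite cnt_n cnt_m def_u /path_elt !down_heights_cat !up_heights_cat /=.
set h := path_end _ _ 0 p; set P := down_heights _ _ 0 p.
set Q := up_heights _ _ 0 p.
rewrite (_ : h - m%:Z + n%:Z = h + n%:Z - m%:Z); last by ring.
set A := down_heights _ _ _ q; set B := up_heights _ _ _ q => sizeB sizeA.
have down_tau : h + n%:Z - m%:Z = (h - m%:Z) + n%:Z by ring.
have up_tau : h = (h - m%:Z) + m%:Z by ring.
apply: (@rt_trans _ _ _
  (elt_of_seqs n m ((h - m%:Z) + n%:Z :: P ++ A) ((h - m%:Z) + m%:Z :: Q ++ B))).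
  by apply/rt_step/wstep_perm_eq; rewrite // -?down_tau -?up_tau perm_cat_cons.
apply: rt_trans; first exact/rt_step/wstep_tauinv_head.
apply/rt_step/wstep_perm_eq; rewrite 1?perm_sym ?perm_cat_cons //.
- by rewrite -sizeA /= !size_cat addnS.
- by rewrite -sizeB /= !size_cat addnS.
Qed.

Lemma swaps_count (P : pred bool) u v : swaps u v -> count P u = count P v.
Proof.
elim=> [x y [p [q [-> ->]]] | // | x y z _ -> _ -> //].
by rewrite !count_cat /=; lia.
Qed.

Lemma orbit_swaps n m u v : (0 < n)%N -> (0 < m)%N ->
  count negb u = n -> count id u = m -> swaps u v ->
  weyl_orbit (path_elt n m u) (path_elt n m v).
Proof.
move=> n_gt0 m_gt0 + + uv; elim: uv => [x y xy | x | x y z xy IHxy _ IHyz] cnt_n cnt_m.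
- exact: orbit_swap_up_down.
- exact: rt_refl.
- apply: rt_trans (IHxy cnt_n cnt_m) (IHyz _ _); by rewrite -(swaps_count _ xy).
Qed.

Lemma swaps_cons b u v : swaps u v -> swaps (b :: u) (b :: v).
Proof.
elim=> [x y [p [q [-> ->]]] | x | x y z _ IH1 _ IH2].
- by apply: rt_step; exists (b :: p), q.
- exact: rt_refl.
- exact: rt_trans IH1 IH2.
Qed.

Lemma swaps_down_first c u :
  swaps (nseq c true ++ false :: u) (false :: nseq c true ++ u).
Proof.
elim: c => [|c IH] /=; first exact: rt_refl.
apply: rt_trans; first exact: swaps_cons IH.
by apply: rt_step; exists [::], (nseq c true ++ u).
Qed.

Lemma swaps_from_sorted w :
  swaps (nseq (count id w) true ++ nseq (count negb w) false) w.
Proof.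
elim: w => [|[] w IH] /=; first exact: rt_refl.
- exact: swaps_cons.
- by apply: rt_trans (swaps_down_first _ _) (swaps_cons _ IH).
Qed.

Lemma Lambda0_path n m : Lambda0 n m = path_elt n m (nseq m true ++ nseq n false).
Proof.
rewrite /Lambda0 /path_elt /elt_of_seqs down_heights_cat up_heights_cat.
rewrite down_heights_ups up_heights_downs path_end_ups down_heights_downs.
rewrite up_heights_ups cats0 /=.
congr pair; apply/ffunP => i; rewrite !ffunE (nth_map 0%N) ?size_iota //.
- by rewrite nth_iota //; have := ltn_ord i; nia.
- by rewrite nth_iota //; lia.
Qed.

Definition block_word (r s : seq nat) i :=
  nseq (nth 0%N r i) true ++ nseq (nth 0%N s i) false.

Definition blocks_word (r s : seq nat) p :=
  flatten [seq block_word r s i | i <- iota 0 p].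

Lemma flatten_map_iotaS (T : Type) (F : nat -> seq T) p :
  flatten [seq F i | i <- iota 0 p.+1] = flatten [seq F i | i <- iota 0 p] ++ F p.
Proof. by rewrite -addn1 iotaD map_cat flatten_cat /= cats0. Qed.

Lemma blocks_wordS r s p :
  blocks_word r s p.+1 = blocks_word r s p ++ block_word r s p.
Proof. exact: flatten_map_iotaS. Qed.

Lemma count_up_blocks r s : count id (blocks_word r s (size r)) = sumn r.
Proof.
rewrite count_flatten -map_comp.
rewrite (eq_map (g := nth 0%N r)); last first.
  by move=> i /=; rewrite count_cat !count_nseq /= mul1n mul0n addn0.
by rewrite -[map _ _]/(mkseq _ _) mkseq_nth.
Qed.

Lemma count_down_blocks r s : count negb (blocks_word r s (size s)) = sumn s.
Proof.
rewrite count_flatten -map_comp.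
rewrite (eq_map (g := nth 0%N s)); last first.
  by move=> i /=; rewrite count_cat !count_nseq /= mul1n mul0n.
by rewrite -[map _ _]/(mkseq _ _) mkseq_nth.
Qed.

Lemma aprefS n m r s p : apref n m r s p.+1 =
  apref n m r s p + (n * nth 0%N r p)%N%:Z - (m * nth 0%N s p)%N%:Z.
Proof. by rewrite /apref big_ord_recr /= addrA. Qed.

Lemma apref_size n m r s : size r = size s ->
  apref n m r s (size r) = (n * sumn r)%N%:Z - (m * sumn s)%N%:Z.
Proof.
elim: r s => [|x r IH] [|y s] //=; first by rewrite /apref big_ord0 !muln0.
by case=> /IH; rewrite /apref big_ord_recl /= => ->; nia.
Qed.

Lemma path_end_blocks n m r s p :
  path_end n m 0 (blocks_word r s p) = apref n m r s p.
Proof.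
elim: p => [|p IH]; first by rewrite /apref big_ord0.
rewrite blocks_wordS !path_end_cat IH path_end_ups path_end_downs aprefS; lia.
Qed.

Lemma down_heights_blocks n m r s p :
  down_heights n m 0 (blocks_word r s p) =
  flatten [seq [seq apref n m r s i.+1 + ((nth 0%N s i - 1 - l) * m)%N%:Z
               | l <- iota 0 (nth 0%N s i)] | i <- iota 0 p].
Proof.
elim: p => [|p IH] //.
rewrite blocks_wordS down_heights_cat IH path_end_blocks down_heights_cat.
rewrite down_heights_ups path_end_ups down_heights_downs flatten_map_iotaS aprefS.
congr (_ ++ _).
apply/eq_in_map => l; rewrite mem_iota add0n => /andP[_ lt_l]; nia.
Qed.

Lemma up_heights_blocks n m r s p :
  up_heights n m 0 (blocks_word r s p) =
  flatten [seq [seq apref n m r s i + (l * n)%N%:Z | l <- iota 0 (nth 0%N r i)]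
          | i <- iota 0 p].
Proof.
elim: p => [|p IH] //.
rewrite blocks_wordS up_heights_cat IH path_end_blocks up_heights_cat.
by rewrite up_heights_ups up_heights_downs flatten_map_iotaS cats0.
Qed.

Lemma LambdaRS_path n m r s : size r = size s ->
  (n * sumn r = m * sumn s)%N ->
  LambdaRS n m r s = path_elt n m (blocks_word r s (size r)).
Proof.
move=> size_rs balanced.
rewrite /LambdaRS /path_elt /elt_of_seqs down_heights_blocks up_heights_blocks.
rewrite /aseq /bseq -size_rs; congr pair; apply/ffunP => j; rewrite !ffunE.
congr (nth _ (flatten _)); apply/eq_in_map => i.
rewrite mem_iota add0n => /andP[_ lt_i]; case: ltnP => // le_r.
have -> : i.+1 = size r by apply/eqP; rewrite eqn_leq lt_i le_r.
by rewrite apref_size // balanced subrr.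
Qed.

Theorem proposition6p2 (m n k : nat) (r s : seq nat) :
  (0 < m)%N -> (0 < n)%N ->
  size r = k -> size s = k ->
  all (fun x => (0 < x)%N) r -> all (fun x => (0 < x)%N) s ->
  sumn r = m -> sumn s = n ->
  weyl_orbit (Lambda0 n m) (LambdaRS n m r s).
Proof.
move=> m_gt0 n_gt0 size_r size_s _ _ sum_r sum_s.
set w := blocks_word r s (size r).
have ups : count id w = m by rewrite count_up_blocks.
have downs : count negb w = n by rewrite /w size_r -size_s count_down_blocks.
have balanced : (n * sumn r = m * sumn s)%N by rewrite sum_r sum_s mulnC.
rewrite Lambda0_path (LambdaRS_path (etrans size_r (esym size_s)) balanced).
have := swaps_from_sorted w; rewrite ups downs => sorted_to_w.
apply: orbit_swaps sorted_to_w => //; rewrite count_cat !count_nseq /=.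
- by rewrite mul0n mul1n.
- by rewrite mul0n mul1n addn0.
Qed.
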